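(* Let $P$ be a $d$-polytope with slack ideal $I_P$ and non-incidence toric ideal $T_P$ (defined in the context). If a binomial $\mathbf x^{\mathbf a}-\mathbf x^{\mathbf b}$, with $\mathbf a,\mathbf b\in\mathbb{Z}_{\geq0}^t$, belongs to $I_P$, then it also belongs to $T_P$.
   Context: Let $P\subset\mathbb{R}^d$ be a $d$-dimensional polytope with labelled vertices $\mathbf p_1,\dots,\mathbf p_v$ and labelled facets $F_1,\dots,F_f$. The symbolic slack matrix $S_P(\mathbf x)$ is the $v\times f$ matrix with a $0$ in entry $(i,j)$ if $\mathbf p_i\in F_j$ and a distinct variable $x_{ij}$ otherwise; let $x_1,\dots,x_t$ denote all these variables. The slack ideal is $I_P=\langle (d+2)\text{-minors of } S_P(\mathbf x)\rangle : (x_1\cdots x_t)^\infty\subseteq\mathbb{C}[x_1,\dots,x_t]$. The non-incidence graph $G_P$ is the bipartite graph on the vertices and facets of $P$ with an edge $\{\mathbf p_i,F_j\}$ iff $\mathbf p_i\notin F_j$ (labelled by $x_{ij}$). $T_P$ is the toric ideal of the vertex-edge incidence matrix of $G_P$, i.e. the kernel of the map $x_{ij}\mapsto s_iu_j$ into $\mathbb{C}[s_1^{\pm1},\dots,s_v^{\pm1},u_1^{\pm1},\dots,u_f^{\pm1}]$. *)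

From HB Require Import structures.
From mathcomp Require Import all_boot all_order all_algebra.
From mathcomp Require Import mpoly.
From mathcomp Require Import complex.
Set Implicit Arguments. Unset Strict Implicit. Unset Printing Implicit Defensive.
Import Order.TTheory GRing.Theory Num.Theory.
Local Open Scope ring_scope.

Section Geometry.
Variables (R : realFieldType) (d : nat).

Definition dotv (x y : 'rV[R]_d) : R := \sum_(k < d) x 0 k * y 0 k.

Definition conv_hull (v : nat) (p : 'I_v -> 'rV[R]_d) (x : 'rV[R]_d) : Prop :=
  exists w : 'I_v -> R,
    (forall i, 0 <= w i) /\ \sum_(i < v) w i = 1 /\ x = \sum_(i < v) w i *: p i.

(* F is a face of P: F = P \cap {x | <c,x> = delta} for a valid inequality
   <c,x> <= delta of P (c = 0 allowed, giving P and the empty face). *)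
Definition is_face (P F : 'rV[R]_d -> Prop) : Prop :=
  exists (c : 'rV[R]_d) (delta : R),
    (forall x, P x -> dotv c x <= delta) /\
    (forall x, F x <-> (P x /\ dotv c x = delta)).

Definition aff_indep (n : nat) (q : 'I_n -> 'rV[R]_d) : bool :=
  row_free (\matrix_(i < n) row_mx (q i) (const_mx 1 : 'rV[R]_1)).

Definition has_aff_pts (S : 'rV[R]_d -> Prop) (n : nat) : Prop :=
  exists q : 'I_n.+1 -> 'rV[R]_d, (forall i, S (q i)) /\ aff_indep q.

(* S has (affine) dimension k (k = -1 for the empty set) *)
Definition has_dim (S : 'rV[R]_d -> Prop) (k : int) : Prop :=
  forall n : nat, has_aff_pts S n <-> (n%:Z <= k).

Definition is_vertex (P : 'rV[R]_d -> Prop) (x : 'rV[R]_d) : Prop :=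
  exists F, is_face P F /\ has_dim F 0 /\ F x.

Definition is_facet (P F : 'rV[R]_d -> Prop) : Prop :=
  is_face P F /\ has_dim F (d%:Z - 1).

End Geometry.

Section Ideals.
Variable A : comNzRingType.

Definition in_ideal (G : A -> Prop) (q : A) : Prop :=
  exists (n : nat) (g : 'I_n -> A) (h : 'I_n -> A),
    (forall i, G (g i)) /\ q = \sum_(i < n) h i * g i.

Definition in_saturation (I : A -> Prop) (m : A) (q : A) : Prop :=
  exists N : nat, I (m ^+ N * q).

End Ideals.

Section Slack.
Variables (R : rcfType) (d v f : nat).
Variables (p : 'I_v -> 'rV[R]_d) (a : 'I_f -> 'rV[R]_d) (b : 'I_f -> R).

Definition facet_set (j : 'I_f) (x : 'rV[R]_d) : Prop :=
  conv_hull p x /\ dotv (a j) x = b j.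

Definition incident (i : 'I_v) (j : 'I_f) : bool := dotv (a j) (p i) == b j.

Definition nonInc : {set 'I_v * 'I_f} := [set ij | ~~ incident ij.1 ij.2].

(* number t of variables; variable x_k (k : 'I_t) is x_{ij} for
   (i,j) = enum_val k *)
Definition nvars : nat := #|nonInc|.

Definition var_pair (k : 'I_nvars) : 'I_v * 'I_f := enum_val k.

Local Notation C := (R[i]).
Local Notation Poly := {mpoly C[nvars]}.

Definition symb_slack : 'M[Poly]_(v, f) :=
  \matrix_(i < v, j < f) \sum_(k < nvars | var_pair k == (i, j)) 'X_k.

Definition is_minor (q : Poly) : Prop :=
  exists (r : 'I_(d.+2) -> 'I_v) (c : 'I_(d.+2) -> 'I_f),
    {homo r : x y / (x < y)%N} /\ {homo c : x y / (x < y)%N} /\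
    q = \det (mxsub r c symb_slack).

Definition slack_ideal (q : Poly) : Prop :=
  in_saturation (in_ideal is_minor) (\prod_(k < nvars) 'X_k) q.

(* target ring C[s_1..s_v, u_1..u_f]; x_{ij} |-> s_i u_j *)
Definition toric_images : nvars.-tuple {mpoly C[v + f]} :=
  [tuple 'X_(lshift f (var_pair k).1) * 'X_(rshift v (var_pair k).2) | k < nvars].

Definition toric_ideal (q : Poly) : Prop :=
  comp_mpoly toric_images q = 0.

End Slack.
Arguments slack_ideal {R d v f} p a b q.
Arguments toric_ideal {R d v f} p a b q.
Arguments nvars {R d v f} p a b.

From HB Require Import structures.
From mathcomp Require Import all_boot all_order all_algebra.
From mathcomp Require Import mpoly.
From mathcomp Require Import complex.
From mathcomp Require Import ring.
Set Implicit Arguments. Unset Strict Implicit. Unset Printing Implicit Defensive.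
Import Order.TTheory GRing.Theory Num.Theory.
Local Open Scope ring_scope.

(* Every point x_ij = s_i u_j S_ij, with s and u nowhere zero and S the slack
   matrix of P, lies on the slack variety: the scaled slack matrix factors
   through C^(d+1), so its (d+2)-minors vanish, and no coordinate is zero, so
   the saturation does not matter.  Evaluating x^a - x^b there gives
   S^a s^r(a) u^c(a) = S^b s^r(b) u^c(b), where r and c are the row and column
   degrees of the exponent, i.e. the vertex degrees in G_P.  Testing with
   s, u in {1,2}^n forces r(a) = r(b) and c(a) = c(b), which is exactly the
   condition for x^a - x^b to lie in T_P. *)

Lemma prodrX_partition (A : comPzSemiRingType) (I J : finType) (pi : I -> J)
    (x : J -> A) (e : I -> nat) :
  \prod_(k : I) x (pi k) ^+ e k = \prod_(j : J) x j ^+ (\sum_(k | pi k == j) e k).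
Proof.
rewrite (partition_big pi xpredT) //=; apply: eq_bigr => j _.
by rewrite -prodrXr; apply: eq_bigr => k /eqP ->.
Qed.

Lemma prodrX_delta (A : comPzSemiRingType) (J : finType) (j0 : J) (c : A) (m : J -> nat) :
  \prod_(j : J) (if j == j0 then c else 1) ^+ m j = c ^+ m j0.
Proof. by rewrite (bigD1 j0) //= eqxx big1 ?mulr1 // => j /negbTE ->; exact: expr1n. Qed.

Lemma prod_expr1n (A : pzSemiRingType) (I : finType) (e : I -> nat) :
  \prod_(i : I) (1 : A) ^+ e i = 1.
Proof. by apply: big1 => i _; exact: expr1n. Qed.

Lemma det_mul_lt_eq0 (F : fieldType) m n (A : 'M[F]_(m, n)) (B : 'M[F]_(n, m)) :
  (n < m)%N -> \det (A *m B) = 0.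
Proof.
move=> lt_nm; apply/eqP; apply: contraT => detAB_neq0.
have /eqP rankAB : row_free (A *m B) by rewrite row_free_unit unitmxE unitfE.
have := leq_trans (mxrankM_maxl A B) (rank_leq_col A).
by rewrite rankAB leqNgt lt_nm.
Qed.

Lemma rmorph_saturation_eq0 (A : comNzRingType) (B : idomainType)
    (phi : {rmorphism A -> B}) (G : A -> Prop) (m q : A) :
  (forall g, G g -> phi g = 0) -> phi m != 0 ->
  in_saturation (in_ideal G) m q -> phi q = 0.
Proof.
move=> phiG phim_neq0 [N [n [g [h [Gg mNq]]]]].
have /eqP : phi (m ^+ N * q) = 0.
  by rewrite mNq rmorph_sum; apply: big1 => k _; rewrite rmorphM /= (phiG _ (Gg k)) mulr0.
by rewrite rmorphM rmorphXn mulf_eq0 expf_eq0 (negbTE phim_neq0) andbF => /eqP.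
Qed.

Lemma monomial_exponents_eq (K : numDomainType) (I : finType) (c c' : K)
    (m n : I -> nat) :
  c != 0 ->
  (forall s : I -> K, (forall i, s i != 0) ->
     c * \prod_i s i ^+ m i = c' * \prod_i s i ^+ n i) ->
  m =1 n.
Proof.
move=> c_neq0 monoE i0.
have cc' : c = c'.
  by have := monoE (fun=> 1) (fun=> oner_neq0 K); rewrite !prod_expr1n !mulr1.
have s_neq0 i : (if i == i0 then 2 else 1) != 0 :> K.
  by case: (i == i0); rewrite ?oner_eq0 ?pnatr_eq0.
move: (monoE _ s_neq0); rewrite !prodrX_delta -cc' => /(mulfI c_neq0) /eqP.
by rewrite -!natrX eqr_nat eqn_exp2l // => /eqP.
Qed.

Section SlackPoints.
Variables (R : rcfType) (d v f : nat).
Variables (p : 'I_v -> 'rV[R]_d) (a : 'I_f -> 'rV[R]_d) (b : 'I_f -> R).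

Local Notation C := (R[i]).
Local Notation rc := (real_complex R).
Local Notation t := (nvars p a b).
Local Notation vp := (@var_pair R d v f p a b).

Definition slack (i : 'I_v) (j : 'I_f) : C := rc (b j - dotv (a j) (p i)).

Definition scaled_slack_point (s : 'I_v -> C) (u : 'I_f -> C) (k : 'I_t) : C :=
  s (vp k).1 * u (vp k).2 * slack (vp k).1 (vp k).2.

Definition row_deg (e : multinom t) (i : 'I_v) : nat := \sum_(k < t | (vp k).1 == i) e k.
Definition col_deg (e : multinom t) (j : 'I_f) : nat := \sum_(k < t | (vp k).2 == j) e k.

Lemma slack_var_neq0 k : slack (vp k).1 (vp k).2 != 0.
Proof.
have := enum_valP k; rewrite -/(var_pair k) inE /incident /slack.
apply: contra => /eqP slack0; rewrite eq_sym -subr_eq0.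
by rewrite -(inj_eq (@complexI R)) slack0 rmorph0.
Qed.

Lemma map_symb_slack s u :
  map_mx (meval (scaled_slack_point s u)) (symb_slack p a b) =
  \matrix_(i, j) (s i * u j * slack i j).
Proof.
apply/matrixP => i j; rewrite !mxE rmorph_sum /=.
have [ij_nonInc|ij_inc] := boolP ((i, j) \in nonInc p a b).
  pose k0 := enum_rank_in ij_nonInc (i, j).
  have vp_k0 : vp k0 = (i, j) by rewrite /var_pair enum_rankK_in.
  rewrite (big_pred1 k0) => [|k]; first by rewrite mevalXU /scaled_slack_point vp_k0.
  by rewrite /= -vp_k0 /var_pair (inj_eq enum_val_inj).
have -> : slack i j = 0.
  by move: ij_inc; rewrite inE negbK /incident /slack => /eqP ->; rewrite subrr rmorph0.
rewrite mulr0 big1 // => k /eqP vp_k.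
by move: ij_inc; rewrite -vp_k /var_pair enum_valP.
Qed.

(* S_ij = b_j - <a_j, p_i> = (p_i, 1) . (-a_j, b_j) *)
Lemma scaled_slack_factor s u :
  \matrix_(i, j) (s i * u j * slack i j) =
  row_mx (\matrix_(i < v, k < d) (s i * rc (p i 0 k))) (\matrix_(i < v, k < 1) s i) *m
  col_mx (\matrix_(k < d, j < f) - (u j * rc (a j 0 k)))
         (\matrix_(k < 1, j < f) (u j * rc (b j))).
Proof.
apply/matrixP => i j; rewrite mul_row_col !mxE big_ord1 !mxE /slack /dotv.
rewrite rmorphB rmorph_sum /= mulrBr addrC; congr (_ + _); first by rewrite mulrA.
rewrite -mulrN -sumrN mulr_sumr; apply: eq_bigr => k _; rewrite !mxE rmorphM /=.
ring.
Qed.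

Lemma minor_scaled_slack_eq0 s u q :
  is_minor q -> meval (scaled_slack_point s u) q = 0.
Proof.
move=> [r [c [_ [_ ->]]]].
rewrite -det_map_mx map_mxsub map_symb_slack scaled_slack_factor mxsub_mul.
by apply: det_mul_lt_eq0; rewrite addn1.
Qed.

Lemma slack_ideal_scaled_slack_eq0 s u q :
  (forall i, s i != 0) -> (forall j, u j != 0) ->
  slack_ideal p a b q -> meval (scaled_slack_point s u) q = 0.
Proof.
move=> s_neq0 u_neq0; apply: rmorph_saturation_eq0; first exact: minor_scaled_slack_eq0.
rewrite rmorph_prod /=; apply/prodf_neq0 => k _.
by rewrite mevalXU !mulf_neq0 ?slack_var_neq0.
Qed.

Lemma meval_scaled_slack_X s u (e : multinom t) :
  meval (scaled_slack_point s u) 'X_[e] =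
  (\prod_(k < t) slack (vp k).1 (vp k).2 ^+ e k) *
  (\prod_i s i ^+ row_deg e i) * (\prod_j u j ^+ col_deg e j).
Proof.
rewrite mevalX /scaled_slack_point.
under [LHS]eq_bigr do rewrite !exprMn.
rewrite !big_split /= -(prodrX_partition (fun k => (vp k).1)).
by rewrite -(prodrX_partition (fun k => (vp k).2)) mulrC mulrA.
Qed.

Lemma comp_toric_X (e : multinom t) :
  comp_mpoly (toric_images p a b) 'X_[e] =
  (\prod_i 'X_(lshift f i) ^+ row_deg e i) * (\prod_j 'X_(rshift v j) ^+ col_deg e j).
Proof.
rewrite comp_mpolyX.
under [LHS]eq_bigr do rewrite tnth_mktuple exprMn.
rewrite big_split /= -(prodrX_partition (fun k => (vp k).1)).
by rewrite -(prodrX_partition (fun k => (vp k).2)).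
Qed.

Lemma slack_binomial_degrees (ea eb : multinom t) :
  slack_ideal p a b ('X_[ea] - 'X_[eb]) ->
  row_deg ea =1 row_deg eb /\ col_deg ea =1 col_deg eb.
Proof.
move=> binom_slack.
have evalE s u : (forall i, s i != 0) -> (forall j, u j != 0) ->
    meval (scaled_slack_point s u) 'X_[ea] = meval (scaled_slack_point s u) 'X_[eb].
  move=> s_neq0 u_neq0; apply/eqP; rewrite -subr_eq0 -rmorphB /=.
  exact/eqP/slack_ideal_scaled_slack_eq0.
have weight_neq0 : \prod_(k < t) slack (vp k).1 (vp k).2 ^+ ea k != 0.
  by apply/prodf_neq0 => k _; rewrite expf_neq0 ?slack_var_neq0.
split.
- apply: monomial_exponents_eq weight_neq0 _ => s s_neq0.
  have := evalE s (fun=> 1) s_neq0 (fun=> oner_neq0 _).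
  by rewrite !meval_scaled_slack_X !prod_expr1n !mulr1 => ->.
- apply: monomial_exponents_eq weight_neq0 _ => u u_neq0.
  have := evalE (fun=> 1) u (fun=> oner_neq0 _) u_neq0.
  by rewrite !meval_scaled_slack_X !prod_expr1n !mulr1 => ->.
Qed.

End SlackPoints.

Theorem lemma3p4 (R : rcfType) (d v f : nat)
    (p : 'I_v -> 'rV[R]_d) (a : 'I_f -> 'rV[R]_d) (b : 'I_f -> R)
    (* P = conv(p_i) is a d-dimensional polytope *)
    (Hdim : has_dim (conv_hull p) d%:Z)
    (* the p_i are exactly the vertices of P, labelled injectively *)
    (Hvert : forall x, is_vertex (conv_hull p) x <-> exists i, x = p i)
    (Hpinj : injective p)
    (* the F_j are exactly the facets of P, labelled injectively *)
    (Hfacet : forall j, is_facet (conv_hull p) (facet_set p a b j))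
    (Hfall : forall F, is_facet (conv_hull p) F ->
               exists j, forall x, F x <-> facet_set p a b j x)
    (Hfinj : forall j j', (forall x, facet_set p a b j x <-> facet_set p a b j' x) -> j = j')
    (ea eb : multinom (nvars p a b)) :
  slack_ideal p a b ('X_[ea] - 'X_[eb]) ->
  toric_ideal p a b ('X_[ea] - 'X_[eb]).
Proof.
move=> /slack_binomial_degrees [rowE colE].
rewrite /toric_ideal comp_mpolyB !comp_toric_X.
rewrite (eq_bigr _ (fun i _ => congr1 _ (rowE i))).
by rewrite (eq_bigr _ (fun j _ => congr1 _ (colE j))) subrr.
Qed.
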